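(* Let $h\in\mathbb N$ and let $F$ be an $h$-flipclass of $\mathfrak S_n$; let $e=|E(F)|$. Then there exists an $h$-flipclass $F'$ of $\mathfrak S_e$ that is isomorphic to $F$. In particular, if $F$ is irreducible, such an $F'$ may be found in $\mathfrak S_{h+1}$.
   Context: $\mathfrak S_n$ is the symmetric group on $[n]$, $T$ its transpositions, $\ell$ the length w.r.t. simple transpositions. The Bruhat graph $B(\mathfrak S_n)$ has an edge $x\xrightarrow{t}y$ iff $yx^{-1}=t\in T$ and $\ell(x)<\ell(y)$. $P_h(u,v)$ is the set of paths $u=x_0\to\cdots\to x_h=v$ of length $h$. Between two fixed vertices there are $0$ or $2$ paths of length $2$; each is the flip of the other. The $i$-th flip operator $f_i$ ($i\in[h-1]$) on $P_h(u,v)$ replaces $x_{i-1}\to x_i\to x_{i+1}$ by its flip; an $h$-flipclass of $\mathfrak S_n$ is an orbit of $\langle f_1,\dots,f_{h-1}\rangle$ on some $P_h(u,v)$. For a path $\Gamma$ with edge labels $t_1,\dots,t_h$, $G(\Gamma)$ is the undirected multigraph whose vertex set is $\{a\in[n]: t_i(a)\ne a \text{ for some } i\}$ with an edge (labelled $i$) between $a$ and $b$ whenever $t_i=(a,b)$. For a flipclass $F$, $E(F)$ denotes the vertex set of $G(\Gamma)$ for any $\Gamma\in F$ (it does not depend on $\Gamma$), and $F$ is irreducible if $G(\Gamma)$ is connected for $\Gamma\in F$ (again independent of $\Gamma$). Isomorphism: for an $h$-flipclass $F$ of $\mathfrak S_n$ and an $h$-flipclass $F'$ of $\mathfrak S_m$,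 an isomorphism from $F$ to $F'$ is a pair $(f,g)$ where $f$ is a bijection from the set of permutations occurring on paths of $F$ onto the set of permutations occurring on paths of $F'$ such that applying $f$ vertexwise gives a bijection $F\to F'$ commuting with the flip operators $f_i$; $g$ is a bijection from the set of transpositions labelling edges of paths of $F$ onto the corresponding set for $F'$, such that whenever $\Gamma\in F$ has label sequence $(t_1,\dots,t_h)$, its image has label sequence $(g(t_1),\dots,g(t_h))$; and $g$ is order-preserving for the lexicographic orders on transpositions (writing transpositions as $(a,b)$ with $a<b$, $(a,b)<(c,d)$ iff $a<c$, or $a=c$ and $b<d$). *)

From mathcomp Require Import all_boot all_fingroup.
Set Implicit Arguments. Unset Strict Implicit. Unset Printing Implicit Defensive.
Local Open Scope group_scope.

(* Permutations of [n] are 'S_n = {perm 'I_n}.  MathComp composes left to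
   right: (x * y) i = y (x i).  Hence the paper's y x^{-1} (functions) is
   x^-1 * y here. *)

Definition is_transp n (t : 'S_n) : bool :=
  [exists a : 'I_n, exists b : 'I_n, (a != b) && (t == tperm a b)].

(* Coxeter length = number of inversions *)
Definition ell n (x : 'S_n) : nat :=
  #|[set p : 'I_n * 'I_n | (p.1 < p.2)%N && (x p.2 < x p.1)%N]|.

Definition bedge n (x y : 'S_n) : bool := is_transp (x^-1 * y) && (ell x < ell y)%N.

Definition vtx n h (G : (h.+1).-tuple 'S_n) (j : nat) : 'S_n := nth 1 G j.

Definition is_bpath n h (G : (h.+1).-tuple 'S_n) : Prop :=
  forall j : 'I_h, bedge (vtx G j) (vtx G j.+1).

(* label t_{j+1} = x_{j+1} x_j^{-1} of the (j+1)-th edge, j < h *)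
Definition label n h (G : (h.+1).-tuple 'S_n) (j : nat) : 'S_n :=
  (vtx G j)^-1 * vtx G j.+1.

Definition flip_at n h (i : nat) (G : (h.+1).-tuple 'S_n) : (h.+1).-tuple 'S_n :=
  if (0 < i < h)%N then
    match [pick z | (z != vtx G i) && bedge (vtx G i.-1) z && bedge z (vtx G i.+1)] with
    | Some z => [tuple (if (j : nat) == i then z else tnth G j) | j < h.+1]
    | None => G
    end
  else G.

Definition flips n h (s : seq nat) (G : (h.+1).-tuple 'S_n) : (h.+1).-tuple 'S_n :=
  foldl (fun G' i => flip_at i G') G s.

Definition is_flipclass n h (F : {set (h.+1).-tuple 'S_n}) : Prop :=
  exists G0, is_bpath G0 /\
    forall G, G \in F <-> exists s : seq nat, all (fun i => 0 < i < h)%N s /\ G = flips s G0.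

Definition verts n h (F : {set (h.+1).-tuple 'S_n}) : {set 'S_n} :=
  [set x | [exists G in F, x \in (G : seq 'S_n)]].

Definition labels n h (F : {set (h.+1).-tuple 'S_n}) : {set 'S_n} :=
  [set t | [exists G in F, [exists j : 'I_h, t == label G j]]].

Definition tlex_lt n (t1 t2 : 'S_n) : Prop :=
  exists a1 b1 a2 b2 : 'I_n,
    (a1 < b1)%N /\ (a2 < b2)%N /\ t1 = tperm a1 b1 /\ t2 = tperm a2 b2 /\
    ((a1 < a2)%N \/ ((a1 : nat) = a2 /\ (b1 < b2)%N)).

Definition flip_iso n m h (F : {set (h.+1).-tuple 'S_n})
    (F' : {set (h.+1).-tuple 'S_m}) : Prop :=
  exists (f : 'S_n -> 'S_m) (g : 'S_n -> 'S_m),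
    [/\ {in verts F &, injective f}, f @: verts F = verts F' &
        [set map_tuple f G | G in F] = F'] /\
    (forall G i, G \in F -> (0 < i < h)%N ->
        map_tuple f (flip_at i G) = flip_at i (map_tuple f G)) /\
    [/\ {in labels F &, injective g}, g @: labels F = labels F',
        (forall G (j : 'I_h), G \in F -> label (map_tuple f G) j = g (label G j)) &
        {in labels F &, forall t1 t2, tlex_lt t1 t2 -> tlex_lt (g t1) (g t2)}].

Definition Eset n h (G : (h.+1).-tuple 'S_n) : {set 'I_n} :=
  [set a | [exists j : 'I_h, label G j a != a]].

Definition Gadj n h (G : (h.+1).-tuple 'S_n) : rel 'I_n :=
  fun a b => (a != b) && [exists j : 'I_h, label G j == tperm a b].

Definition Gconnected n h (G : (h.+1).-tuple 'S_n) : Prop :=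
  {in Eset G &, forall a b, connect (Gadj G) a b}.

From mathcomp Require Import all_boot all_fingroup zify.
Set Implicit Arguments. Unset Strict Implicit. Unset Printing Implicit Defensive.
Local Open Scope group_scope.

(* Every vertex of a path in a flipclass F is x0 * t_1 * ... * t_j for transpositions t_i
   of letters in E = E(F); flips keep E, since a flip replaces two consecutive labels by two
   others with the same product.  Replace each letter of E, and each position in x0^-1 @: E,
   by its rank.  This turns every vertex x into a permutation [compress x] of 'I_m (the
   identity beyond #|E|), sends x * tperm a b to [compress x] * tperm (rk a) (rk b), and
   preserves Bruhat edges, because these only compare letters and positions.  Flips are
   preserved too, because two permutations have at most two Bruhat midpoints: three would
   force X^-1 * W to be a 3-cycle, whose three factorisations cannot all be Bruhat paths.
   When G(Gamma) is connected, its h edges reach at most h + 1 vertices, so #|E| <= h + 1. *)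

(** * Transpositions *)

Section Transpositions.
Variable T : finType.
Implicit Types (a b c d : T).

Lemma tperm_moved a b c : tperm a b c != c -> c = a \/ c = b.
Proof. by case: tpermP => [->|->|]; rewrite ?eqxx //; [left|right]. Qed.

Lemma tperm_eqP a b c d : a != b -> tperm a b = tperm c d ->
  (a = c /\ b = d) \/ (a = d /\ b = c).
Proof.
move=> ab E; have Ea : tperm c d a = b by rewrite -E tpermL.
have : tperm c d a != a by rewrite Ea eq_sym.
by case/tperm_moved=> Ec; move: Ea; rewrite Ec ?tpermL ?tpermR => ->; [left|right].
Qed.

Lemma tperm_3cycle_rot a b c : a != b -> b != c -> a != c ->
  tperm a b * tperm a c = tperm b c * tperm b a.
Proof.
move=> ab bc ac; have [ba cb ca] : [/\ b != a, c != b & c != a] by rewrite !(eq_sym c) eq_sym.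
apply/permP => x; rewrite !permM.
case: (tpermP a b x) => [->|->|/eqP xa /eqP xb].
- by rewrite (tpermD ab cb) (tpermD ba ca) tpermR.
- by rewrite !tpermL (tpermD bc ac).
- case: (tpermP a c x) => [Ex|->|_ /eqP xc]; first by rewrite Ex eqxx in xa.
    by rewrite tpermR tpermL.
  by rewrite !tpermD // eq_sym.
Qed.

Lemma perm_on_tperm (E : {set T}) a b : a \in E -> b \in E -> perm_on E (tperm a b).
Proof. by move=> aE bE; apply: subset_trans (tperm_on a b) _; rewrite subUset !sub1set aE bE. Qed.

End Transpositions.

Section TranspositionsSn.
Variable n : nat.
Implicit Types (a b c d : 'I_n) (s t p : 'S_n).

Lemma is_transp_tperm a b : is_transp (tperm a b) = (a != b).
Proof.
apply/idP/idP => [/existsP [c /existsP [d /andP [cd /eqP E]]]|ab].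
  by apply: contra cd => /eqP ab; move/permP/(_ c): E; rewrite ab tperm1 perm1 tpermL => ->.
by apply/existsP; exists a; apply/existsP; exists b; rewrite ab eqxx.
Qed.

Lemma transpE t a : is_transp t -> t a != a -> t = tperm a (t a).
Proof.
move=> /existsP [c /existsP [d /andP [cd /eqP ->]]].
by case/tperm_moved=> ->; rewrite ?tpermL ?tpermR // tpermC.
Qed.

Lemma transp_mul_moved s s' a : is_transp s -> is_transp s' -> s * s' != 1 ->
  (s a != a) || (s' a != a) = ((s * s') a != a).
Proof.
move=> ts ts' ss'; rewrite permM; apply/idP/idP; last first.
  by apply: contraLR; rewrite negb_or !negbK => /andP [/eqP -> /eqP ->].
case: (eqVneq (s a) a) => [-> //|sa _]; apply/eqP => E.
have Es' : s' = tperm a (s a).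
  by rewrite tpermC {1}(transpE ts' (a := s a)) E // eq_sym.
by move: ss'; rewrite (transpE ts sa) Es' tperm2 eqxx.
Qed.

Lemma transp_factors_involution p k l : p (p k) = k -> is_transp (tperm k (p k) * p) ->
  p l != l -> tperm l (p l) \in [:: tperm k (p k); tperm k (p k) * p].
Proof.
move=> ppk tr pl; rewrite !inE.
case: (eqVneq l k) => [->|lk]; first by rewrite eqxx.
case: (eqVneq l (p k)) => [->|lpk]; first by rewrite ppk tpermC eqxx.
have s'l : (tperm k (p k) * p) l = p l by rewrite permM tpermD // eq_sym.
by rewrite (transpE tr (a := l)) s'l ?eqxx ?orbT.
Qed.

Lemma transp_factors_3cycle p k : p k != k -> p (p k) != k ->
  is_transp (tperm k (p k) * p) -> p = tperm k (p k) * tperm k (p (p k)).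
Proof.
move=> pk ppk tr; have s'k : (tperm k (p k) * p) k = p (p k) by rewrite permM tpermL.
have -> : tperm k (p (p k)) = tperm k (p k) * p by rewrite -s'k -(transpE tr) // s'k.
by rewrite mulgA tperm2 mul1g.
Qed.

End TranspositionsSn.

(** * Bruhat edges and midpoints *)

Section BruhatGraph.
Variable n : nat.
Implicit Types (a b c i j k : 'I_n) (p x y z X W : 'S_n).

Definition inversions y := [set q : 'I_n * 'I_n | (q.1 < q.2)%N && (y q.2 < y q.1)%N].

Lemma ell_mul_tperm_lt y i j : (i < j)%N -> (y i < y j)%N ->
  (ell y < ell (y * tperm (y i) (y j)))%N.
Proof.
move=> ij yij; set y' := _ * _; pose tau := tperm i j.
have y'E k : y' k = y (tau k) by rewrite permM (inj_tperm _ _ _ perm_inj).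
(* Swapping positions i and j in a pair, when this keeps it ordered, injects the
   inversions of y into those of y' other than (i, j). *)
pose phi (q : 'I_n * 'I_n) := if (tau q.1 < tau q.2)%N then (tau q.1, tau q.2) else q.
have phi_inv q : q \in inversions y -> phi q \in inversions y'.
  case: q => k l; rewrite inE /phi /= => /andP [kl ylk].
  case: ifP => [tkl|/negbT]; first by rewrite inE /= !y'E !tpermK tkl.
  rewrite inE /= !y'E kl /=; move: kl ylk; rewrite -leqNgt /tau.
  by case: (tpermP i j k) => [->|->|_ _]; case: (tpermP i j l) => [->|->|_ _]; lia.
have phi_ij q : q \in inversions y -> phi q != (i, j).
  case: q => k l; rewrite inE /phi /= => /andP [kl ylk].
  case: ifP => _; apply/eqP => -[Ek El].
    by move: kl; rewrite -(tpermK i j k) -(tpermK i j l) -/tau Ek El tpermL tpermR; lia.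
  by move: ylk; rewrite Ek El; lia.
have phi_inj : {in inversions y &, injective phi}.
  move=> [k1 l1] [k2 l2]; rewrite !inE /phi /= => /andP [kl1 _] /andP [kl2 _].
  case: ifP => H1; case: ifP => H2 [] E1 E2.
  - by rewrite -[k1](tpermK i j) -[l1](tpermK i j) -/tau E1 E2 !tpermK.
  - by move: H2; rewrite -E1 -E2 !tpermK kl1.
  - by move: H1; rewrite E1 E2 !tpermK kl2.
  - by rewrite E1 E2.
have ij_inv : (i, j) \in inversions y' by rewrite inE /= !y'E tpermL tpermR ij yij.
have sub : phi @: inversions y \subset inversions y' :\ (i, j).
  by apply/subsetP => _ /imsetP [q q_inv ->]; rewrite in_setD1 phi_ij ?phi_inv.
change (#|inversions y| < #|inversions y'|)%N.
rewrite -(card_in_imset phi_inj) (cardsD1 (i, j) (inversions y')) ij_inv.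
by rewrite add1n ltnS subset_leq_card.
Qed.

Lemma ell_mul_tpermE y i j : (i < j)%N ->
  (ell y < ell (y * tperm (y i) (y j)))%N = (y i < y j)%N.
Proof.
move=> ij; case: (ltngtP (y i) (y j)) => [yij|yji|/val_inj/perm_inj eij].
- exact: ell_mul_tperm_lt.
- set y' := y * _; have := ell_mul_tperm_lt (y := y') ij.
  rewrite /y' !permM tpermL tpermR -mulgA tpermC tperm2 mulg1 => /(_ yji) lt_y'y.
  by apply/negbTE; rewrite -leqNgt ltnW.
- by move: ij; rewrite eij ltnn.
Qed.

Lemma bedge_tperm x a b :
  bedge x (x * tperm a b) = (a != b) && ((a < b)%N == (x^-1 a < x^-1 b)%N).
Proof.
rewrite /bedge mulKg is_transp_tperm; case: (eqVneq a b) => [//|] /=.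
have [i [j [-> ->]]] : exists i j, a = x i /\ b = x j.
  by exists (x^-1 a), (x^-1 b); rewrite !permKV.
rewrite !permK (inj_eq perm_inj) => ab.
case: (ltngtP i j) => [ij|ji|/val_inj eij].
- by rewrite ell_mul_tpermE // eqb_id.
- rewrite tpermC ell_mul_tpermE // eqbF_neg -leqNgt ltn_neqAle andbC.
  by rewrite (inj_eq val_inj) (inj_eq perm_inj) eq_sym ab andbT.
- by move: ab; rewrite eij eqxx.
Qed.

Lemma bedge_transp x y : bedge x y -> exists a b, a != b /\ y = x * tperm a b.
Proof.
case/andP=> /existsP [a /existsP [b /andP [ab /eqP E]]] _.
by exists a, b; rewrite -E mulKVg.
Qed.

Lemma bedge2_neq1 X z W : bedge X z -> bedge z W -> X^-1 * W != 1.
Proof.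
case/andP=> _ lt1 /andP [_ lt2]; apply: contraTneq (ltn_trans lt1 lt2) => /eqP.
by rewrite -eq_invg_mul invgK => /eqP ->; rewrite ltnn.
Qed.

Lemma bedge2_moved X z W a : bedge X z -> bedge z W ->
  ((X^-1 * z) a != a) || ((z^-1 * W) a != a) = ((X^-1 * W) a != a).
Proof.
move=> e1 e2; have /andP [tr1 _] := e1; have /andP [tr2 _] := e2.
rewrite transp_mul_moved // mulgA mulgK //; exact: bedge2_neq1 e1 e2.
Qed.

Definition bruhat_mid X W z := bedge X z && bedge z W.

Lemma bruhat_mid_tperm2 X a b c : a != b -> b != c -> a != c ->
  bruhat_mid X (X * (tperm a b * tperm a c)) (X * tperm a b)
  = ((a < b)%N == (X^-1 a < X^-1 b)%N) && ((a < c)%N == (X^-1 b < X^-1 c)%N).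
Proof.
move=> ab bc ac; rewrite /bruhat_mid mulgA !bedge_tperm ab ac /=.
by rewrite invMg tpermV !permM tpermL tpermD // eq_sym.
Qed.

Lemma bruhat_mids_not_3cycle X a b c : a != b -> b != c -> a != c ->
  let W := X * (tperm a b * tperm a c) in
  ~ [/\ bruhat_mid X W (X * tperm a b), bruhat_mid X W (X * tperm b c)
      & bruhat_mid X W (X * tperm c a)].
Proof.
move=> ab bc ac W; have [ba cb ca] : [/\ b != a, c != b & c != a] by rewrite !(eq_sym c) eq_sym.
rewrite /W {2 3}(tperm_3cycle_rot ab bc ac) {2}(tperm_3cycle_rot bc ca ba).
rewrite !bruhat_mid_tperm2 //.
case=> /andP [/eqP Hab /eqP Hac] /andP [/eqP Hbc /eqP Hba] /andP [/eqP Hca /eqP Hcb].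
move: ab bc ac; rewrite -!(inj_eq val_inj) /=.
move: Hab Hac Hbc Hba Hca Hcb; lia.
Qed.

Lemma bruhat_mid_factor X W (p := X^-1 * W) z : bruhat_mid X W z ->
  exists2 k, p k != k & z = X * tperm k (p k).
Proof.
case/andP=> e1 e2; have p1 := bedge2_neq1 e1 e2.
have [a [b [ab Ez]]] := bedge_transp e1.
have ts' : is_transp (z^-1 * W) by case/andP: e2.
set s' := z^-1 * W in ts'.
have Ep : p = tperm a b * s' by rewrite /s' Ez invMg tpermV !mulgA tperm2 mul1g.
have [pa pb] : p a = s' b /\ p b = s' a by rewrite Ep !permM tpermL tpermR.
case: (eqVneq (s' b) b) => sb; first by exists a; rewrite pa sb // eq_sym.
case: (eqVneq (s' a) a) => sa; first by exists b; rewrite pb sa // tpermC.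
move: sb; rewrite (transpE ts' sa) => /tperm_moved [ba|bsa]; first by rewrite ba eqxx in ab.
by move: p1; rewrite -/p Ep (transpE ts' sa) -bsa tperm2 eqxx.
Qed.

Lemma bruhat_mid_transp X W (p := X^-1 * W) z k : bruhat_mid X W z ->
  z = X * tperm k (p k) -> is_transp (tperm k (p k) * p).
Proof. by case/andP=> _ /andP [tr _] Ez; move: tr; rewrite Ez invMg tpermV mulgA. Qed.

Lemma bruhat_mids_3cycle X W (p := X^-1 * W) k z : p k != k -> p (p k) != k ->
  is_transp (tperm k (p k) * p) -> bruhat_mid X W z ->
  z \in [:: X * tperm k (p k); X * tperm (p k) (p (p k)); X * tperm (p (p k)) k].
Proof.
move=> pk ppk tr mz; have Ep := transp_factors_3cycle pk ppk tr.
have pkppk : p k != p (p k) by rewrite (inj_eq perm_inj) eq_sym.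
have pppk : p (p (p k)) = k.
  by rewrite {1}Ep permM [tperm k (p k) _]tpermD ?tpermR // eq_sym.
have [l pl ->] := bruhat_mid_factor mz; rewrite -/p in pl *.
have : l \in [:: k; p k; p (p k)].
  apply: contraR pl; rewrite !inE => /norP [lk /norP [lpk lppk]].
  by rewrite Ep permM !tpermD // eq_sym.
by rewrite !inE => /or3P [] /eqP ->; rewrite ?pppk !eqxx ?orbT.
Qed.

(* With p = X^-1 * W, the midpoints are X * tperm k (p k): if p is an involution there
   are two candidates, and if p is a 3-cycle the three candidates are not all midpoints. *)
Lemma bruhat_mids_le2 X W (s : seq 'S_n) : uniq s -> all (bruhat_mid X W) s ->
  (size s <= 2)%N.
Proof.
move=> us /allP mids; rewrite leqNgt; apply/negP => s3.
have z0s : nth X s 0 \in s by rewrite mem_nth // (leq_trans _ s3).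
set p := X^-1 * W.
have [k pk Ez0] := bruhat_mid_factor (mids _ z0s).
have tr := bruhat_mid_transp (mids _ z0s) Ez0.
case: (eqVneq (p (p k)) k) => [ppk|ppk].
  have sub : {subset s <= [:: X * tperm k (p k); X * (tperm k (p k) * p)]}.
    move=> z /mids mz; have [l pl ->] := bruhat_mid_factor mz.
    by move: (transp_factors_involution ppk tr pl); rewrite !inE => /orP [] /eqP ->;
      rewrite eqxx ?orbT.
  by have := uniq_leq_size us sub; rewrite leqNgt s3.
have sub := fun z zs => bruhat_mids_3cycle pk ppk tr (mids z zs).
have [_ Es] := uniq_min_size us sub s3.
have pkppk : p k != p (p k) by rewrite (inj_eq perm_inj) eq_sym.
have [kpk kppk] : k != p k /\ k != p (p k) by rewrite !(eq_sym k).
apply: (bruhat_mids_not_3cycle (X := X) kpk pkppk kppk) => /=.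
rewrite -transp_factors_3cycle // mulKVg.
by split; apply: mids; rewrite Es !inE eqxx ?orbT.
Qed.

Lemma bruhat_mid_decomp X W z (Q : pred 'I_n) : bruhat_mid X W z ->
  (forall a, (X^-1 * W) a != a -> Q a) ->
  exists a b c d, [/\ [&& Q a, Q b, Q c & Q d], z = X * tperm a b & W = z * tperm c d].
Proof.
case/andP=> e1 e2 QW.
have [a [b [ab Ez]]] := bedge_transp e1; have [c [d [cd EW]]] := bedge_transp e2.
have moved u : (tperm a b u != u) || (tperm c d u != u) -> Q u.
  by move=> mu; apply: QW; rewrite -(bedge2_moved _ e1 e2) EW mulKg Ez mulKg.
exists a, b, c, d; split => //; apply/and4P; split; apply: moved.
- by rewrite tpermL eq_sym ab.
- by rewrite tpermR ab.
- by rewrite tpermL (eq_sym d) cd orbT.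
- by rewrite tpermR cd orbT.
Qed.

Definition other_mid X Z W z := (z != Z) && bedge X z && bedge z W.

Lemma other_mid_unique X Z W z1 z2 : bruhat_mid X W Z ->
  other_mid X Z W z1 -> other_mid X Z W z2 -> z1 = z2.
Proof.
move=> mZ /andP [/andP [z1Z e1] f1] /andP [/andP [z2Z e2] f2].
apply/eqP; apply: contraT => z12.
have := @bruhat_mids_le2 X W [:: Z; z1; z2]; rewrite /= !inE negb_or.
by rewrite !(eq_sym Z) z1Z z2Z z12 mZ /bruhat_mid e1 f1 e2 f2 => /(_ isT isT).
Qed.

End BruhatGraph.

(** * Compression to the letters of a set *)

Section SetRank.
Variables (n : nat) (A : {set 'I_n}).

Definition set_rank (a : 'I_n) : nat := #|[set c in A | (c < a)%N]|.

Lemma set_rank_ltE : {in A &, forall a b, (set_rank a < set_rank b)%N = (a < b)%N}.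
Proof.
move=> a b aA bA; case: (ltnP a b) => ab.
  apply: proper_card; apply/properP; split; last by exists a; rewrite !inE ?aA ?ab ?ltnn.
  by apply/subsetP => c; rewrite !inE => /andP [-> /ltn_trans ->].
rewrite ltnNge subset_leq_card //; apply/subsetP => c.
by rewrite !inE => /andP [-> /leq_trans ->].
Qed.

Lemma set_rank_inj : {in A &, injective set_rank}.
Proof.
move=> a b aA bA E; apply: val_inj.
by case: (ltngtP a b) => //; rewrite -set_rank_ltE // E ltnn.
Qed.

Lemma set_rank_lt_card a : a \in A -> (set_rank a < #|A|)%N.
Proof.
move=> aA; apply: proper_card; apply/properP; split; last by exists a; rewrite // !inE ltnn andbF.
by apply/subsetP => c; rewrite inE => /andP [].
Qed.

Lemma set_rank_onto r : (r < #|A|)%N -> exists2 a, a \in A & set_rank a = r.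
Proof.
move=> rA; have uA : uniq (map set_rank (enum A)).
  by rewrite map_inj_in_uniq ?enum_uniq // => a b; rewrite !mem_enum; apply: set_rank_inj.
have sub : {subset map set_rank (enum A) <= iota 0 #|A|}.
  by move=> k /mapP [a]; rewrite mem_enum mem_iota => aA ->; rewrite set_rank_lt_card.
have le_size : (size (iota 0 #|A|) <= size (map set_rank (enum A)))%N.
  by rewrite size_iota size_map -cardE.
have [_ Es] := uniq_min_size uA sub le_size.
have : r \in iota 0 #|A| by rewrite mem_iota.
by rewrite -Es => /mapP [a]; rewrite mem_enum => aA ->; exists a.
Qed.

End SetRank.

Lemma im_invg_perm_on n (E : {set 'I_n}) (x y : 'S_n) :
  perm_on E (x^-1 * y) -> y^-1 @: E = x^-1 @: E.
Proof.
move=> /perm_onV; rewrite invMg invgK => /im_perm_on {2}<-.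
by rewrite -imset_comp; apply: eq_imset => c /=; rewrite permM permK.
Qed.

Lemma perm_on_divg n (E : {set 'I_n}) (x0 x y : 'S_n) :
  perm_on E (x0^-1 * x) -> perm_on E (x0^-1 * y) -> perm_on E (x^-1 * y).
Proof.
have -> : x^-1 * y = (x0^-1 * x)^-1 * (x0^-1 * y) by rewrite invMg invgK -mulgA mulKVg.
by move=> px py; rewrite perm_onM ?perm_onV.
Qed.

Section Compression.
Variables (n m : nat) (E : {set 'I_n}).
Hypothesis leEm : (#|E| <= m)%N.
Implicit Types (x y : 'S_n) (a b c : 'I_n) (r : 'I_m).

Definition unrank r : option 'I_n := [pick c in E | set_rank E c == r].

Lemma unrank_rank c r : c \in E -> (r : nat) = set_rank E c -> unrank r = Some c.
Proof.
move=> cE rc; rewrite /unrank; case: pickP => [c' /andP [c'E /eqP c'r]|/(_ c)].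
  by congr Some; apply: (set_rank_inj c'E cE); rewrite c'r.
by rewrite cE rc eqxx.
Qed.

Lemma unrank_out r : (#|E| <= r)%N -> unrank r = None.
Proof.
move=> Er; rewrite /unrank; case: pickP => // c /andP [cE /eqP cr].
by move: (set_rank_lt_card cE); rewrite cr ltnNge Er.
Qed.

Lemma ordinal_rank a : a \in E -> exists r : 'I_m, (r : nat) = set_rank E a.
Proof. by move=> aE; exists (Ordinal (leq_trans (set_rank_lt_card aE) leEm)). Qed.

Lemma ordinal_unrank r : (r < #|E|)%N -> exists2 c, c \in E & (r : nat) = set_rank E c.
Proof. by case/set_rank_onto=> c cE <-; exists c. Qed.

Lemma eq_rank_ord a b (ra rb : 'I_m) : a \in E -> b \in E ->
  (ra : nat) = set_rank E a -> (rb : nat) = set_rank E b -> (ra == rb) = (a == b).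
Proof. by move=> aE bE Ra Rb; rewrite -val_eqE /= Ra Rb (inj_in_eq (@set_rank_inj _ E)). Qed.

Definition compress_inv_fun x r : 'I_m :=
  if unrank r is Some c then insubd r (set_rank (x^-1 @: E) (x^-1 c)) else r.

Lemma compress_inv_fun_rank x c r : c \in E -> (r : nat) = set_rank E c ->
  (compress_inv_fun x r : nat) = set_rank (x^-1 @: E) (x^-1 c).
Proof.
move=> cE rc; rewrite /compress_inv_fun (unrank_rank cE rc) val_insubd.
have xcE : x^-1 c \in x^-1 @: E by exact: imset_f.
by rewrite (leq_trans (set_rank_lt_card xcE)) // card_imset //; exact: perm_inj.
Qed.

Lemma compress_inv_fun_out x r : (#|E| <= r)%N -> compress_inv_fun x r = r.
Proof. by move=> Er; rewrite /compress_inv_fun unrank_out. Qed.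

Lemma compress_inv_fun_lt x r : (r < #|E|)%N -> (compress_inv_fun x r < #|E|)%N.
Proof.
case/ordinal_unrank=> c cE rc; rewrite (compress_inv_fun_rank x cE rc).
by rewrite -[#|E|](card_imset _ (@perm_inj _ x^-1)) set_rank_lt_card ?imset_f.
Qed.

Lemma compress_inv_fun_inj x : injective (compress_inv_fun x).
Proof.
move=> r1 r2; case: (ltnP r1 #|E|) => r1E; case: (ltnP r2 #|E|) => r2E.
- have [c1 c1E rc1] := ordinal_unrank r1E; have [c2 c2E rc2] := ordinal_unrank r2E.
  move/(congr1 (@nat_of_ord m)); rewrite (compress_inv_fun_rank x c1E rc1).
  rewrite (compress_inv_fun_rank x c2E rc2) => /set_rank_inj.
  by rewrite !imset_f // => /(_ isT isT)/perm_inj c12; apply: ord_inj; rewrite rc1 rc2 c12.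
- rewrite (compress_inv_fun_out x r2E) => e.
  by move: (compress_inv_fun_lt x r1E); rewrite e ltnNge r2E.
- rewrite (compress_inv_fun_out x r1E) => e.
  by move: (compress_inv_fun_lt x r2E); rewrite -e ltnNge r1E.
- by rewrite !compress_inv_fun_out.
Qed.

Definition compress x : 'S_m := (perm (@compress_inv_fun_inj x))^-1.

Lemma compressV_rank x c r : c \in E -> (r : nat) = set_rank E c ->
  ((compress x)^-1 r : nat) = set_rank (x^-1 @: E) (x^-1 c).
Proof. by rewrite invgK permE; apply: compress_inv_fun_rank. Qed.

Lemma compressV_out x r : (#|E| <= r)%N -> (compress x)^-1 r = r.
Proof. by rewrite invgK permE; apply: compress_inv_fun_out. Qed.

Lemma compress_out x r : (#|E| <= r)%N -> compress x r = r.
Proof. by move=> Er; rewrite -{1}(compressV_out x Er) permKV. Qed.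

Lemma compress_inj x y : perm_on E (x^-1 * y) -> compress x = compress y -> x = y.
Proof.
move=> xy cxy; apply: invg_inj; apply/permP => c.
case: (boolP (c \in E)) => cE; last first.
  by apply: (@perm_inj _ y); rewrite permKV -permM (out_perm xy cE).
have [r rc] := ordinal_rank cE.
have := congr1 (@nat_of_ord m) (congr1 (fun s : 'S_m => s^-1 r) cxy).
rewrite /= !(compressV_rank _ cE rc) (im_invg_perm_on xy) => /set_rank_inj.
by apply; rewrite ?imset_f // -(im_invg_perm_on xy) imset_f.
Qed.

Lemma compress_mul_tperm x a b (ra rb : 'I_m) : a \in E -> b \in E ->
  (ra : nat) = set_rank E a -> (rb : nat) = set_rank E b ->
  compress (x * tperm a b) = compress x * tperm ra rb.
Proof.
move=> aE bE ra_a rb_b; apply: invg_inj; apply/permP => r.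
rewrite invMg tpermV permM.
have tE : perm_on E (x^-1 * (x * tperm a b)) by rewrite mulKg perm_on_tperm.
case: (ltnP r #|E|) => rE; last first.
  rewrite tpermD ?compressV_out //; apply: contraTneq rE => <-; rewrite -ltnNge.
    by rewrite ra_a set_rank_lt_card.
  by rewrite rb_b set_rank_lt_card.
have [c cE rc] := ordinal_unrank rE.
have tcE : tperm a b c \in E by case: tpermP.
have trc : (tperm ra rb r : nat) = set_rank E (tperm a b c).
  case: (tpermP a b c) => [ca|cb|/eqP ca /eqP cb].
  - by rewrite -rb_b (_ : r = ra) ?tpermL //; apply: ord_inj; rewrite rc ca ra_a.
  - by rewrite -ra_a (_ : r = rb) ?tpermR //; apply: ord_inj; rewrite rc cb rb_b.
  - have [ar br] : ra != r /\ rb != r.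
      by rewrite (eq_rank_ord aE cE ra_a rc) (eq_rank_ord bE cE rb_b rc) eq_sym ca eq_sym cb.
    by rewrite tpermD.
apply: ord_inj; rewrite (compressV_rank _ cE rc) (compressV_rank _ tcE trc).
by rewrite (im_invg_perm_on tE) invMg tpermV permM.
Qed.

Lemma bedge_compress x a b (ra rb : 'I_m) : a \in E -> b \in E ->
  (ra : nat) = set_rank E a -> (rb : nat) = set_rank E b ->
  bedge (compress x) (compress x * tperm ra rb) = bedge x (x * tperm a b).
Proof.
move=> aE bE ra_a rb_b; rewrite !bedge_tperm.
rewrite (eq_rank_ord aE bE ra_a rb_b) (compressV_rank x aE ra_a) (compressV_rank x bE rb_b).
rewrite ra_a rb_b.
by rewrite !set_rank_ltE ?imset_f.
Qed.

Definition compress_label t : 'S_m := (compress 1)^-1 * compress t.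

Lemma compress_label_tperm a b (ra rb : 'I_m) : a \in E -> b \in E ->
  (ra : nat) = set_rank E a -> (rb : nat) = set_rank E b ->
  compress_label (tperm a b) = tperm ra rb.
Proof.
move=> aE bE ra_a rb_b; rewrite /compress_label -[tperm a b]mul1g.
by rewrite (compress_mul_tperm _ aE bE ra_a rb_b) mulKg.
Qed.

Lemma compress_other_mid (X Z W z : 'S_n) : perm_on E (X^-1 * Z) -> perm_on E (X^-1 * W) ->
  other_mid X Z W z -> other_mid (compress X) (compress Z) (compress W) (compress z).
Proof.
move=> XZ XW /andP [/andP [zZ e1] e2].
have mz : bruhat_mid X W z by rewrite /bruhat_mid e1 e2.
have suppE a : (X^-1 * W) a != a -> a \in E by apply: contraR => /(out_perm XW) ->.
have [a [b [d [e [/and4P [aE bE dE eE] Ez EW]]]]] := bruhat_mid_decomp mz suppE.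
have [[ra Ra] [rb Rb]] := (ordinal_rank aE, ordinal_rank bE).
have [[rd Rd] [re Re]] := (ordinal_rank dE, ordinal_rank eE).
have cz : compress z = compress X * tperm ra rb by rewrite Ez (compress_mul_tperm _ aE bE Ra Rb).
have cW : compress W = compress z * tperm rd re by rewrite EW (compress_mul_tperm _ dE eE Rd Re).
rewrite /other_mid {2}cz cW (bedge_compress _ aE bE Ra Rb) (bedge_compress _ dE eE Rd Re).
rewrite -Ez -EW e1 e2 !andbT.
apply: contra zZ => /eqP /compress_inj -> //.
by rewrite Ez invMg tpermV -mulgA perm_onM ?perm_on_tperm.
Qed.

Lemma compress_other_mid_inv (X Z W : 'S_n) (z' : 'S_m) : perm_on E (X^-1 * W) ->
  other_mid (compress X) (compress Z) (compress W) z' ->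
  exists2 z, other_mid X Z W z & compress z = z'.
Proof.
move=> XW /andP [/andP [zZ e1] e2].
have mz : bruhat_mid (compress X) (compress W) z' by rewrite /bruhat_mid e1 e2.
have suppE r : ((compress X)^-1 * compress W) r != r -> (r < #|E|)%N.
  by apply: contraR; rewrite -leqNgt => rE; rewrite permM compressV_out // compress_out.
have [r1 [r2 [r3 [r4 [/and4P [h1 h2 h3 h4] Ez EW]]]]] := bruhat_mid_decomp mz suppE.
have [[a aE Ra] [b bE Rb]] := (ordinal_unrank h1, ordinal_unrank h2).
have [[d dE Rd] [e eE Re]] := (ordinal_unrank h3, ordinal_unrank h4).
have cz : compress (X * tperm a b) = z' by rewrite (compress_mul_tperm _ aE bE Ra Rb) Ez.
have zW : X * tperm a b * tperm d e = W.
  apply: compress_inj; last by rewrite (compress_mul_tperm _ dE eE Rd Re) cz EW.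
  by rewrite !invMg !tpermV -!mulgA; apply: perm_onM; [|apply: perm_onM]; rewrite ?perm_on_tperm.
exists (X * tperm a b) => //; rewrite /other_mid.
rewrite -(bedge_compress _ aE bE Ra Rb) -Ez e1 -zW -(bedge_compress _ dE eE Rd Re) cz -EW e2.
by rewrite !andbT; apply: contra zZ => /eqP <-; rewrite cz.
Qed.

Definition transps_on : {set 'S_n} := [set tperm a b | a in E, b in E & a != b].

Lemma transps_onP t : reflect (exists a b, [/\ a != b, a \in E, b \in E & t = tperm a b])
  (t \in transps_on).
Proof.
apply: (iffP imset2P) => [[a b aE]|[a [b [ab aE bE ->]]]].
  by rewrite inE => /andP [bE ab] ->; exists a, b.
by exists a b; rewrite // inE bE.
Qed.

Lemma compress_label_inj : {in transps_on &, injective compress_label}.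
Proof.
move=> _ _ /transps_onP [a [b [ab aE bE ->]]] /transps_onP [c [d [cd cE dE ->]]].
have [[ra Ra] [rb Rb]] := (ordinal_rank aE, ordinal_rank bE).
have [[rc Rc] [rd Rd]] := (ordinal_rank cE, ordinal_rank dE).
have rab : ra != rb by rewrite (eq_rank_ord aE bE Ra Rb).
rewrite (compress_label_tperm aE bE Ra Rb) (compress_label_tperm cE dE Rc Rd).
case/(tperm_eqP rab)=> [[/eqP ac /eqP bd]|[/eqP ad /eqP bc]].
  by move: ac bd; rewrite (eq_rank_ord aE cE Ra Rc) (eq_rank_ord bE dE Rb Rd) => /eqP -> /eqP ->.
move: ad bc; rewrite (eq_rank_ord aE dE Ra Rd) (eq_rank_ord bE cE Rb Rc).
by rewrite tpermC => /eqP -> /eqP ->.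
Qed.

Lemma compress_label_lex : {in transps_on &, forall t1 t2,
  tlex_lt t1 t2 -> tlex_lt (compress_label t1) (compress_label t2)}.
Proof.
have mem t (a b : 'I_n) : t \in transps_on -> (a < b)%N -> t = tperm a b -> a \in E /\ b \in E.
  case/transps_onP=> c [d [cd cE dE ->]] _ /(tperm_eqP cd).
  by case=> [[<- <-]|[<- <-]].
move=> t1 t2 t1E t2E [a1 [b1 [a2 [b2 [ab1 [ab2 [e1 [e2 lex]]]]]]]].
have [[a1E b1E] [a2E b2E]] := (mem _ _ _ t1E ab1 e1, mem _ _ _ t2E ab2 e2).
have [[ra1 Ra1] [rb1 Rb1]] := (ordinal_rank a1E, ordinal_rank b1E).
have [[ra2 Ra2] [rb2 Rb2]] := (ordinal_rank a2E, ordinal_rank b2E).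
exists ra1, rb1, ra2, rb2.
rewrite e1 e2 (compress_label_tperm a1E b1E Ra1 Rb1) (compress_label_tperm a2E b2E Ra2 Rb2).
rewrite Ra1 Rb1 Ra2 Rb2 !set_rank_ltE //; do 4 split => //.
by case: lex => [|[/ord_inj ->]]; [left | right].
Qed.

End Compression.

(** * Paths and flips *)

Lemma eq_existsb_ord2 h i (L L' : nat -> bool) : (0 < i < h)%N ->
  (forall j, (j < h)%N -> j != i.-1 -> j != i -> L j = L' j) ->
  L i.-1 || L i = L' i.-1 || L' i -> [exists j : 'I_h, L j] = [exists j : 'I_h, L' j].
Proof.
move=> /andP [i0 ih] eqL eqL2.
have i1h : (i.-1 < h)%N by rewrite (leq_ltn_trans (leq_pred i)).
suff imp K K' : (forall j, (j < h)%N -> j != i.-1 -> j != i -> K j = K' j) ->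
    K i.-1 || K i = K' i.-1 || K' i -> [exists j : 'I_h, K j] -> [exists j : 'I_h, K' j].
  by apply/idP/idP; apply: imp => // j jh j1 j2; rewrite eqL.
move=> eqK eqK2 /existsP [j Kj].
have [j12|] := boolP ((j == i.-1 :> nat) || (j == i :> nat)); last first.
  by case/norP=> j1 j2; apply/existsP; exists j; rewrite -eqK.
have : K' i.-1 || K' i by rewrite -eqK2; case/orP: j12 => /eqP <-; rewrite Kj ?orbT.
by case/orP=> ?; apply/existsP; [exists (Ordinal i1h)|exists (Ordinal ih)].
Qed.

Section Paths.
Variables n h : nat.
Implicit Types (G : (h.+1).-tuple 'S_n) (z : 'S_n) (E : {set 'I_n}).

Lemma vtx_map m (f : 'S_n -> 'S_m) G j : (j <= h)%N -> vtx (map_tuple f G) j = f (vtx G j).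
Proof. by move=> jh; rewrite /vtx (nth_map 1) // size_tuple. Qed.

Lemma vtxS G j : vtx G j.+1 = vtx G j * label G j.
Proof. by rewrite /label mulKVg. Qed.

Lemma eq_from_vtx G1 G2 : (forall j, (j <= h)%N -> vtx G1 j = vtx G2 j) -> G1 = G2.
Proof.
by move=> eqG; apply: eq_from_tnth => k; rewrite !(tnth_nth 1); apply: eqG; rewrite -ltnS.
Qed.

Lemma vtx_flip_at G i z : (0 < i < h)%N ->
  [pick z | other_mid (vtx G i.-1) (vtx G i) (vtx G i.+1) z] = Some z ->
  forall j, (j <= h)%N -> vtx (flip_at i G) j = if j == i then z else vtx G j.
Proof.
move=> ih pick_z j jh; rewrite /flip_at ih.
rewrite (_ : [pick z | _] = Some z) //.
by rewrite /vtx -[j]/(nat_of_ord (Ordinal (jh : (j < h.+1)%N))) nth_mktuple (tnth_nth 1).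
Qed.

Lemma flip_at_id G i : [pick z | other_mid (vtx G i.-1) (vtx G i) (vtx G i.+1) z] = None ->
  flip_at i G = G.
Proof. by rewrite /flip_at => pick_none; case: ifP; rewrite // (_ : [pick z | _] = None). Qed.

Lemma flip_at_out G i : ~~ (0 < i < h)%N -> flip_at i G = G.
Proof. by rewrite /flip_at => /negbTE ->. Qed.

Lemma bpath_mid G i : is_bpath G -> (0 < i < h)%N ->
  bruhat_mid (vtx G i.-1) (vtx G i.+1) (vtx G i).
Proof.
move=> bG /andP [i0 ih]; rewrite /bruhat_mid (bG (Ordinal ih)) andbT.
by have := bG (Ordinal (leq_ltn_trans (leq_pred i) ih)); rewrite /= prednK.
Qed.

Definition bpath_on (x0 : 'S_n) E G := [/\ is_bpath G, vtx G 0 = x0 & Eset G = E].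

Lemma bpath_on_flip_at (x0 : 'S_n) E G i : bpath_on x0 E G -> bpath_on x0 E (flip_at i G).
Proof.
move=> pG; have [ih|] := boolP (0 < i < h)%N; last by move/flip_at_out ->.
case pick_z: [pick z | other_mid (vtx G i.-1) (vtx G i) (vtx G i.+1) z] => [z|];
  last by rewrite flip_at_id.
have /andP [/andP [_ e1] e2] : other_mid (vtx G i.-1) (vtx G i) (vtx G i.+1) z.
  by move: pick_z; case: pickP => // ? ? [<-].
have vG := vtx_flip_at ih pick_z; case: pG => bG v0 EG.
have /andP [i0 ih'] := ih.
have /andP [f1 f2] := bpath_mid bG ih.
have [ne1 ne2] : i.-1 == i = false /\ i.+1 == i = false by split; apply/eqP; lia.
split.
- move=> j; rewrite !vG ?(ltnW (ltn_ord j)) ?ltn_ord //.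
  case: (eqVneq (j : nat).+1 i) => [ji|j1].
    by move: e1; rewrite -ji (ltn_eqF (ltnSn j)).
  case: (eqVneq (j : nat) i) => [ji|j2]; first by rewrite ji ?eqxx ?ne2.
  exact: bG.
- by rewrite vG // (ltn_eqF i0).
- rewrite -EG; apply/setP => a; rewrite !inE.
  apply: (eq_existsb_ord2 (L := fun j => label _ j a != a) (L' := fun j => label G j a != a) ih)
    => [j jh j1 j2|].
    rewrite /label !vG ?(ltnW jh) // (negbTE j2) ifN //.
    by apply: contra j1 => /eqP <-.
  have [le1 le2] : (i.-1 <= h)%N /\ (i <= h)%N by lia.
  by rewrite /label !vG // prednK // eqxx ne1 ne2 !bedge2_moved.
Qed.

Lemma bpath_on_flips (x0 : 'S_n) E G s : bpath_on x0 E G -> bpath_on x0 E (flips s G).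
Proof. by elim: s G => [|i s IH] G pG //=; apply/IH/bpath_on_flip_at. Qed.

Lemma bpath_on_label (x0 : 'S_n) E G j : bpath_on x0 E G -> (j < h)%N ->
  exists a b, [/\ a != b, a \in E, b \in E & label G j = tperm a b].
Proof.
case=> bG _ <- jh; have [a [b [ab Ej]]] := bedge_transp (bG (Ordinal jh)).
have lj : label G j = tperm a b by rewrite /label Ej mulKg.
exists a, b; split => //; rewrite inE; apply/existsP; exists (Ordinal jh).
  by rewrite /= lj tpermL eq_sym.
by rewrite /= lj tpermR.
Qed.

Lemma bpath_on_vtx (x0 : 'S_n) E G j : bpath_on x0 E G ->
  (j <= h)%N -> perm_on E (x0^-1 * vtx G j).
Proof.
move=> pG; elim: j => [|j IH] jh; first by case: pG => _ -> _; rewrite mulVg perm_on1.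
have [a [b [_ aE bE lj]]] := bpath_on_label pG jh.
by rewrite vtxS lj mulgA; apply: perm_onM; [apply/IH/ltnW | apply: perm_on_tperm].
Qed.

End Paths.

Lemma map_flip_at n m h (f : 'S_n -> 'S_m) (G : (h.+1).-tuple 'S_n) i
    (X := vtx G i.-1) (Z := vtx G i) (W := vtx G i.+1) : (0 < i < h)%N ->
  (forall z1 z2 : 'S_n, other_mid X Z W z1 -> other_mid X Z W z2 -> z1 = z2) ->
  (forall z : 'S_n, other_mid X Z W z -> other_mid (f X) (f Z) (f W) (f z)) ->
  (forall z' : 'S_m, other_mid (f X) (f Z) (f W) z' -> exists2 z, other_mid X Z W z & f z = z') ->
  map_tuple f (flip_at i G) = flip_at i (map_tuple f G).
Proof.
move=> ih mid_uniq fwd bwd; have /andP [i0 ih'] := ih.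
have [le1 le2] : (i.-1 <= h)%N /\ (i <= h)%N by lia.
have fvtx : [/\ vtx (map_tuple f G) i.-1 = f X, vtx (map_tuple f G) i = f Z
               & vtx (map_tuple f G) i.+1 = f W] by rewrite !vtx_map.
case: fvtx => fX fZ fW.
case pick_z: [pick z | other_mid X Z W z] => [z|]; last first.
  rewrite (flip_at_id (G := G) pick_z) flip_at_id // fX fZ fW.
  case: pickP => // z' /bwd [z mz _]; move: pick_z; case: pickP => // /(_ z).
  by rewrite mz.
have mz : other_mid X Z W z by move: pick_z; case: pickP => // ? ? [<-].
have pick_fz : [pick z' | other_mid (vtx (map_tuple f G) i.-1) (vtx (map_tuple f G) i)
                           (vtx (map_tuple f G) i.+1) z'] = Some (f z).
  rewrite fX fZ fW; case: pickP => [z' /bwd [z2 mz2 <-]|/(_ (f z))].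
    by rewrite (mid_uniq _ _ mz2 mz).
  by rewrite fwd.
apply: eq_from_vtx => j jh; rewrite vtx_map // (vtx_flip_at ih pick_z) //.
by rewrite (vtx_flip_at ih pick_fz) //; case: eqP => // _; rewrite vtx_map.
Qed.

Lemma verts_map n m h (f : 'S_n -> 'S_m) (F : {set (h.+1).-tuple 'S_n}) :
  verts [set map_tuple f G | G in F] = f @: verts F.
Proof.
apply/setP => y; apply/idP/imsetP.
  rewrite inE => /exists_inP [_ /imsetP [G GF ->] /mapP [x xG ->]].
  by exists x => //; rewrite inE; apply/exists_inP; exists G.
case=> x; rewrite inE => /exists_inP [G GF xG] ->; rewrite inE.
by apply/exists_inP; exists (map_tuple f G); rewrite ?imset_f ?map_f.
Qed.

Lemma labels_map n m h (f g : 'S_n -> 'S_m) (F : {set (h.+1).-tuple 'S_n}) :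
  (forall G (j : 'I_h), G \in F -> label (map_tuple f G) j = g (label G j)) ->
  labels [set map_tuple f G | G in F] = g @: labels F.
Proof.
move=> fg; apply/setP => t; apply/idP/imsetP.
  rewrite inE => /exists_inP [_ /imsetP [G GF ->] /existsP [j /eqP ->]].
  exists (label G j); rewrite ?fg // inE.
  by apply/exists_inP; exists G => //; apply/existsP; exists j.
case=> t0; rewrite inE => /exists_inP [G GF /existsP [j /eqP ->]] ->; rewrite inE.
apply/exists_inP; exists (map_tuple f G); rewrite ?imset_f //.
by apply/existsP; exists j; rewrite fg.
Qed.

Section CompressPaths.
Variables (n m h : nat) (E : {set 'I_n}) (x0 : 'S_n).
Hypothesis leEm : (#|E| <= m)%N.
Local Notation f := (compress leEm).
Local Notation g := (compress_label leEm).
Implicit Types (G : (h.+1).-tuple 'S_n).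

Lemma label_compress G j : bpath_on x0 E G -> (j < h)%N ->
  label (map_tuple f G) j = g (label G j).
Proof.
move=> pG jh; have [a [b [_ aE bE lj]]] := bpath_on_label pG jh.
have [[ra Ra] [rb Rb]] := (ordinal_rank leEm aE, ordinal_rank leEm bE).
rewrite lj (compress_label_tperm _ aE bE Ra Rb) /label !vtx_map ?(ltnW jh) // vtxS lj.
by rewrite (compress_mul_tperm _ _ aE bE Ra Rb) mulKg.
Qed.

Lemma compress_bpath G : bpath_on x0 E G -> is_bpath (map_tuple f G).
Proof.
move=> pG j; have [a [b [_ aE bE lj]]] := bpath_on_label pG (ltn_ord j).
have [[ra Ra] [rb Rb]] := (ordinal_rank leEm aE, ordinal_rank leEm bE).
rewrite !vtx_map ?(ltnW (ltn_ord j)) // vtxS lj (compress_mul_tperm _ _ aE bE Ra Rb).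
by rewrite (bedge_compress _ _ aE bE Ra Rb) -lj -vtxS; case: pG => bG _ _; apply: bG.
Qed.

Lemma compress_flip_at G i : bpath_on x0 E G ->
  map_tuple f (flip_at i G) = flip_at i (map_tuple f G).
Proof.
move=> pG; have [ih|] := boolP (0 < i < h)%N; last by move=> ih; rewrite !flip_at_out.
have pv j k : (j <= h)%N -> (k <= h)%N -> perm_on E ((vtx G j)^-1 * vtx G k).
  by move=> jh kh; apply: (perm_on_divg (x0 := x0)); apply: bpath_on_vtx pG _.
apply: map_flip_at => // [z1 z2|z|z'].
- by apply: other_mid_unique; case: pG => bG _ _; apply: bpath_mid.
- by apply: compress_other_mid; apply: pv; lia.
- by apply: compress_other_mid_inv; apply: pv; lia.
Qed.

Lemma compress_flips G s : bpath_on x0 E G ->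
  map_tuple f (flips s G) = flips s (map_tuple f G).
Proof.
elim: s G => [|i s IH] G pG //=.
by rewrite IH ?compress_flip_at //; apply: bpath_on_flip_at.
Qed.

End CompressPaths.

(** * Connected transposition graphs *)

Section TranspositionGraph.
Variables (T I : finType) (t : I -> {perm T}) (a0 : T).

Definition tgraph : rel T := fun a b => (a != b) && [exists i, t i == tperm a b].

Fixpoint ball k : {set T} :=
  if k is k'.+1 then ball k' :|: [set b | [exists c in ball k', tgraph c b]] else [set a0].

Definition inner_edges k : {set I} :=
  [set i | [exists a in ball k, exists b in ball k, (a != b) && (t i == tperm a b)]].

Lemma ballS k : ball k.+1 = ball k :|: [set b | [exists c in ball k, tgraph c b]].
Proof. by []. Qed.

Lemma ball_mono k l : (k <= l)%N -> ball k \subset ball l.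
Proof.
elim: l => [|l IH]; first by rewrite leqn0 => /eqP ->.
by rewrite leq_eqVlt => /orP [/eqP -> //|/IH kl]; apply: subset_trans kl (subsetUl _ _).
Qed.

Lemma inner_edges_mono k : inner_edges k \subset inner_edges k.+1.
Proof.
apply/subsetP => i; rewrite /inner_edges !inE => /exists_inP [a aN /exists_inP [b bN abi]].
have /subsetP sub := ball_mono (leqnSn k).
by apply/exists_inP; exists a; rewrite ?sub //; apply/exists_inP; exists b; rewrite ?sub.
Qed.

Lemma card_ball k : (#|ball k| <= #|inner_edges k|.+1)%N.
Proof.
elim: k => [|k IH]; first by rewrite cards1.
have /subsetP subN := ball_mono (leqnSn k).
(* Each new vertex b is the endpoint outside ball k of the edge it was reached by, and
   that edge has just become inner. *)
pose e i := odflt a0 [pick b | (t i b != b) && (b \notin ball k)].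
have new_edge b : b \in ball k.+1 :\: ball k ->
    b \in e @: (inner_edges k.+1 :\: inner_edges k).
  case/setDP=> bN1 bN; have /exists_inP [c cN /andP [cb /existsP [i /eqP ti]]] :
      [exists c in ball k, tgraph c b] by move: bN1; rewrite ballS in_setU inE (negbTE bN).
  apply/imsetP; exists i; first rewrite in_setD /inner_edges !inE.
    apply/andP; split; last first.
      apply/exists_inP; exists c; rewrite ?subN //.
      by apply/exists_inP; exists b; rewrite // ti cb eqxx.
    apply: contra bN => /exists_inP [a' a'N /exists_inP [b' b'N /andP [_ /eqP]]].
    by rewrite ti => /(tperm_eqP cb) [[_ ->]|[_ ->]].
  rewrite /e; case: pickP => [b' /andP [mb' nb']|/(_ b)]; last by rewrite ti tpermR cb bN.
  by move: mb' nb'; rewrite ti => /tperm_moved [->|->] //; rewrite cN.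
rewrite -(cardsID (ball k) (ball k.+1)) (setIidPr (ball_mono (leqnSn k))).
rewrite -(cardsID (inner_edges k) (inner_edges k.+1)) (setIidPr (inner_edges_mono k)).
rewrite -addSn leq_add // (leq_trans _ (leq_imset_card e _)) //.
by apply/subset_leq_card/subsetP => b /new_edge.
Qed.

Lemma ball_path x p k : x \in ball k -> path tgraph x p -> last x p \in ball (k + size p).
Proof.
elim: p x k => [|y p IH] x k xN /=; first by rewrite addn0.
case/andP=> xy py; rewrite -addSnnS; apply: IH py.
by rewrite ballS in_setU inE; apply/orP; right; apply/exists_inP; exists x.
Qed.

Lemma card_connect : (#|[set b | connect tgraph a0 b]| <= #|I|.+1)%N.
Proof.
have sub : [set b | connect tgraph a0 b] \subset ball #|T|.
  apply/subsetP => b; rewrite inE => /connectP [p pp ->]; case/shortenP: pp => p' pp' up' _.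
  have lt_p' : (size p' < #|T|)%N.
    by rewrite -ltnS -[(size p').+1]/(size (a0 :: p')) -(card_uniqP up') ltnS max_card.
  by have := ball_path (k := 0) (set11 a0) pp'; rewrite add0n; apply/subsetP/ball_mono/ltnW.
by rewrite (leq_trans (subset_leq_card sub)) // (leq_trans (card_ball _)) // ltnS max_card.
Qed.

End TranspositionGraph.

Lemma flipclass_compress h n m (F : {set (h.+1).-tuple 'S_n}) (Gam : (h.+1).-tuple 'S_n) :
  is_flipclass F -> Gam \in F -> (#|Eset Gam| <= m)%N ->
  exists F' : {set (h.+1).-tuple 'S_m}, is_flipclass F' /\ flip_iso F F'.
Proof.
case=> G0 [bG0 memF] GamF; set E := Eset G0; set x0 := vtx G0 0.
have pG0 : bpath_on x0 E G0 by [].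
have pF G : G \in F -> bpath_on x0 E G by case/memF=> s [_ ->]; apply: bpath_on_flips.
have [_ _ ->] := pF _ GamF => leEm; set f := compress leEm; set g := compress_label leEm.
have vF x : x \in verts F -> perm_on E (x0^-1 * x).
  rewrite inE => /exists_inP [G GF /(nthP 1) [j jh <-]].
  by apply: (bpath_on_vtx (pF _ GF)); rewrite -ltnS -(size_tuple G).
have lF t : t \in labels F -> t \in transps_on E.
  rewrite inE => /exists_inP [G GF /existsP [j /eqP ->]]; apply/transps_onP.
  exact: bpath_on_label (pF _ GF) (ltn_ord j).
have fg G (j : 'I_h) : G \in F -> label (map_tuple f G) j = g (label G j).
  by move=> GF; apply: label_compress (pF _ GF) (ltn_ord j).
exists [set map_tuple f G | G in F]; split.
  exists (map_tuple f G0); split; first exact: compress_bpath pG0.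
  move=> G'; split.
    case/imsetP=> G /memF [s [sh ->]] ->; exists s; split => //; exact: compress_flips.
  case=> s [sh ->]; rewrite -(compress_flips _ _ pG0); apply: imset_f; apply/memF; by exists s.
exists f, g; split; [split => // | split].
- move=> x y /vF xV /vF yV; apply: compress_inj; exact: perm_on_divg xV yV.
- by rewrite verts_map.
- by move=> G i GF _; apply: compress_flip_at (pF _ GF).
- split.
  + by move=> t1 t2 /lF t1E /lF t2E; apply: compress_label_inj.
  + by rewrite (labels_map fg).
  + exact: fg.
  + by move=> t1 t2 /lF t1E /lF t2E; apply: compress_label_lex.
Qed.

Lemma card_Eset_connected n h (G : (h.+1).-tuple 'S_n) : Gconnected G -> (#|Eset G| <= h.+1)%N.
Proof.
move=> cG; have [->|[a0 a0E]] := set_0Vmem (Eset G); first by rewrite cards0.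
have sub : Eset G \subset [set b | connect (tgraph (fun j : 'I_h => label G j)) a0 b].
  by apply/subsetP => b bE; rewrite inE; apply: cG.
by rewrite (leq_trans (subset_leq_card sub)) // (leq_trans (card_connect _ _)) // card_ord.
Qed.

Theorem theorem6p12 (h n : nat) (F : {set (h.+1).-tuple 'S_n})
    (Gam : (h.+1).-tuple 'S_n) :
  is_flipclass F -> Gam \in F ->
  (exists F' : {set (h.+1).-tuple 'S_(#|Eset Gam|)},
      is_flipclass F' /\ flip_iso F F') /\
  (Gconnected Gam ->
     exists F' : {set (h.+1).-tuple 'S_(h.+1)},
      is_flipclass F' /\ flip_iso F F').
Proof.
move=> HF GamF; split; first exact: flipclass_compress HF GamF (leqnn _).
by move=> cGam; apply: flipclass_compress HF GamF (card_Eset_connected cGam).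
Qed.
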